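(* Let $D=(E,\mathcal{F})$ be a proper set system, $a,b\in E$ with $a\neq b$, and let $A\subseteq E$ satisfy $|A\cap\{a,b\}|=1$. Then $\omega(D*A)=\omega(D'_{ab}*A)$.
   Context: A set system $D=(E,\mathcal{F})$ is a finite set $E$ together with a collection $\mathcal{F}$ of subsets of $E$ (feasible sets); proper means $\mathcal{F}\neq\emptyset$. $\triangle$ denotes symmetric difference. For $A\subseteq E$, the twist is $D*A=(E,\{A\triangle X: X\in\mathcal{F}\})$. The width $\omega(D)$ of a proper set system is the size of a largest feasible set minus the size of a smallest feasible set. For distinct $a,b\in E$, the result of exchanging handle ends of $a$ and $b$ is $D'_{ab}=(E,\mathcal{F}'_{ab})$ with $\mathcal{F}'_{ab}=\mathcal{F}\triangle\{F\cup\{a,b\}\mid F\in\mathcal{F},\ F\subseteq E\setminus\{a,b\}\}$. *)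

From mathcomp Require Import all_boot.
Set Implicit Arguments. Unset Strict Implicit. Unset Printing Implicit Defensive.

(* A set system D = (E, F): ground set = a finType E, feasible sets F : {set {set E}}. *)

Definition symd (E : finType) (A B : {set E}) : {set E} := (A :\: B) :|: (B :\: A).

Definition proper_ss (E : finType) (F : {set {set E}}) : Prop := F != set0.

Definition twist (E : finType) (F : {set {set E}}) (A : {set E}) : {set {set E}} :=
  [set symd A X | X in F].

(* width: size of largest feasible set minus size of smallest feasible set
   (the min is taken with neutral element #|E|, an upper bound for all sizes) *)
Definition width (E : finType) (F : {set {set E}}) : nat :=
  (\max_(X in F) #|X|) - \big[minn/#|E|]_(X in F) #|X|.

Definition exch (E : finType) (F : {set {set E}}) (a b : E) : {set {set E}} :=
  symd F [set X :|: [set a; b] | X in [set Y in F | Y \subset ~: [set a; b]]].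

From HB Require Import structures.
From mathcomp Require Import all_boot.

(* Exchanging handle ends is an involution that adds or removes Y :|: [set a; b]
   alongside each feasible Y avoiding a and b.  When A contains exactly one of a
   and b, twisting Y :|: [set a; b] by A gives a set of the same size as twisting
   Y by A, so D * A and D'_ab * A realise the same set of sizes, and the width
   only depends on that set. *)

(* [minn] has no neutral element in [nat]; a commutative semigroup law is all
   that [big_undup] needs. *)
HB.instance Definition _ := SemiGroup.isComLaw.Build nat minn minnA minnC.

Lemma eq_big_idem_AC {R : Type} {op : SemiGroup.com_law R} {x : R}
    {I : eqType} {r1 r2 : seq I} {F : I -> R} :
  idempotent_op op -> r1 =i r2 ->
  \big[op/x]_(i <- r1) F i = \big[op/x]_(i <- r2) F i.
Proof.
move=> opxx eq_r; rewrite -big_undup // -[RHS]big_undup //; apply/perm_big.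
by rewrite uniq_perm ?undup_uniq // => i; rewrite !mem_undup eq_r.
Qed.

Lemma in_symd (T : finType) (A B : {set T}) x :
  (x \in symd A B) = (x \in A) (+) (x \in B).
Proof. by rewrite /symd !inE; case: (x \in A); case: (x \in B). Qed.

Lemma symdKr (T : finType) (A B : {set T}) : symd (symd A B) B = A.
Proof. by apply/setP => x; rewrite !in_symd -addbA addbb addbF. Qed.

Lemma card_symd_setU (T : finType) (A B Y : {set T}) : [disjoint Y & B] ->
  #|symd A (Y :|: B)| + #|A :&: B| = #|symd A Y| + #|B :\: A|.
Proof.
move=> dis_YB.
have outside_B : symd A (Y :|: B) :\: B = symd A Y :\: B.
  by apply/setP => x; rewrite !(inE, in_symd); case: (x \in B); rewrite ?orbF.
have on_B_setU : symd A (Y :|: B) :&: B = B :\: A.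
  apply/setP => x; rewrite !(inE, in_symd).
  by case: (x \in B); case: (x \in A); rewrite /= ?orbT ?andbF.
have on_B : symd A Y :&: B = A :&: B.
  apply/setP => x; rewrite !(inE, in_symd).
  by have [Bx | _] := boolP (x \in B); rewrite ?(disjointFl dis_YB Bx) ?addbF ?andbF.
rewrite -(cardsID B (symd A (Y :|: B))) -(cardsID B (symd A Y)).
rewrite outside_B on_B_setU on_B.
by rewrite addnAC [RHS]addnAC (addnC #|B :\: A|).
Qed.

Section Width.

Context {E : finType}.
Implicit Types (F : {set {set E}}) (A X : {set E}).

Definition sizes F : seq nat := [seq #|X| | X in F].

Lemma width_sizes F :
  width F = (\max_(n <- sizes F) n) - \big[minn/#|E|]_(n <- sizes F) n.
Proof. by rewrite /width !big_image. Qed.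

Lemma eq_width F1 F2 : sizes F1 =i sizes F2 -> width F1 = width F2.
Proof.
move=> eq_sizes; rewrite !width_sizes.
by rewrite (eq_big_idem_AC maxnn eq_sizes) (eq_big_idem_AC minnn eq_sizes).
Qed.

Lemma sizes_twistP F A n :
  reflect (exists2 X, X \in F & #|symd A X| = n) (n \in sizes (twist F A)).
Proof.
apply: (iffP imageP) => [[_ /imsetP[X XF ->] ->] | [X XF <-]]; first by exists X.
by exists (symd A X) => //; apply/imsetP; exists X.
Qed.

End Width.

Section Exchange.

Context {E : finType}.
Variables a b : E.
Implicit Types (F : {set {set E}}) (A X Y : {set E}).

Lemma mem_exch_avoid F Y : Y \subset ~: [set a; b] -> (Y \in exch F a b) = (Y \in F).
Proof.
move=> /subsetP avoid_ab; rewrite /exch in_symd.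
suff /negbTE-> :
    Y \notin [set X :|: [set a; b] | X in [set Z in F | Z \subset ~: [set a; b]]].
  exact: addbF.
apply/imsetP => -[Z _ eq_Y].
have /avoid_ab : a \in Y by rewrite eq_Y !inE eqxx orbT.
by rewrite !inE eqxx.
Qed.

Lemma exchK F : exch (exch F a b) a b = F.
Proof.
rewrite {1}/exch.
have -> : [set Y in exch F a b | Y \subset ~: [set a; b]] =
          [set Y in F | Y \subset ~: [set a; b]].
  apply/setP => Y; rewrite [LHS]inE [RHS]inE.
  by case: (boolP (Y \subset _)) => [/(mem_exch_avoid F)->|]; rewrite ?andbF.
exact: symdKr.
Qed.

Lemma mem_exch F X : X \in exch F a b ->
  X \in F \/ exists Y, [/\ Y \in F, [disjoint Y & [set a; b]] & X = Y :|: [set a; b]].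
Proof.
rewrite /exch in_symd; case: (X \in F) => /=; first by left.
move=> /imsetP[Y]; rewrite inE -disjoints_subset => /andP[YF dis_Y] ->.
by right; exists Y.
Qed.

Lemma sizes_twist_exch_sub F A : #|A :&: [set a; b]| = #|[set a; b] :\: A| ->
  {subset sizes (twist (exch F a b) A) <= sizes (twist F A)}.
Proof.
move=> balanced n /sizes_twistP[X XF <-]; apply/sizes_twistP.
have [XF' | [Y [YF dis_Y ->]]] := mem_exch F X XF; first by exists X.
exists Y => //; apply/(@addIn #|A :&: [set a; b]|).
by rewrite card_symd_setU // balanced.
Qed.

End Exchange.

Theorem proposition3p5 (E : finType) (F : {set {set E}}) (a b : E) (A : {set E}) :
  proper_ss F -> a != b -> #|A :&: [set a; b]| = 1 ->
  width (twist F A) = width (twist (exch F a b) A).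
Proof.
move=> _ neq_ab one_end_in_A.
have balanced : #|A :&: [set a; b]| = #|[set a; b] :\: A|.
  have := cardsID A [set a; b].
  by rewrite setIC one_end_in_A cards2 neq_ab => -[<-].
apply: eq_width => n; apply/idP/idP; last exact: sizes_twist_exch_sub.
by rewrite -{1}(exchK a b F); apply: sizes_twist_exch_sub.
Qed.
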